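(* Let $K>2$, let $n_1<n_2$ be positive integers, and let $n_3,\dots,n_K$ be positive integers. Let $\tau$ be the time of the first emptying event and $p$ the type emptied at time $\tau$. Then for every $t$ with $\Pr[\tau=t]>0$, \[ \Pr[p=1\mid \tau=t]\ \ge\ \Pr[p=2\mid \tau=t]. \]
   Context: Initial stocks $\vec n^{(0)}=(n_1,\dots,n_K)$ of $K$ goodie types evolve as follows: at each step $t=1,2,\dots$, as long as at least two coordinates of $\vec n^{(t-1)}$ are nonzero, an index $i$ is chosen uniformly at random (independently of the past) among the indices with $n_i^{(t-1)}>0$, and $\vec n^{(t)}=\vec n^{(t-1)}-\vec e_i$ ($\vec e_i$ the $i$-th standard unit vector). The time of the first emptying event is $\tau=\min\{t : \exists i \text{ with } n_i^{(t)}=0 \text{ and } n_i^{(0)}>0\}$; exactly one type is emptied at that step, and $p$ denotes that type. *)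

From HB Require Import structures.
From mathcomp Require Import all_boot all_order all_algebra.
Set Implicit Arguments. Unset Strict Implicit. Unset Printing Implicit Defensive.
Import Order.TTheory GRing.Theory Num.Theory.

(* Stock vectors are functions 'I_K -> nat; goodie type i+1 is index i. *)

Definition dec_stock (K : nat) (s : 'I_K -> nat) (i : 'I_K) : 'I_K -> nat :=
  fun j => if j == i then (s j).-1 else s j.

Definition stock_after (K : nat) (n : 'I_K -> nat) (w : seq 'I_K) : 'I_K -> nat :=
  foldl (@dec_stock K) n w.

Definition nnz (K : nat) (s : 'I_K -> nat) : nat := #|[pred j | 0 < s j]|.

Local Open Scope ring_scope.

(* Probability that the process started at s makes the successive choices w:
   at each step, if at least two coordinates are nonzero, an index is chosen
   uniformly among those with positive coordinate; otherwise the process has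
   stopped (no further choice is made, probability 0 for any further step). *)
Fixpoint path_prob (R : realFieldType) (K : nat) (s : 'I_K -> nat) (w : seq 'I_K) : R :=
  match w with
  | [::] => 1
  | i :: w' =>
      if ((2 <= nnz s) && (0 < s i))%N
      then ((nnz s)%:R)^-1 * path_prob R (dec_stock s i) w'
      else 0
  end.
Local Close Scope ring_scope.

Definition emptied_type (K : nat) (n : 'I_K -> nat) (w : seq 'I_K) (i : 'I_K) : bool :=
  (stock_after n w i == 0) && (0 < n i).

Definition some_emptied (K : nat) (n : 'I_K -> nat) (w : seq 'I_K) : bool :=
  [exists i, emptied_type n w i].

(* the first emptying event happens exactly at the last step of w *)
Definition tau_is_len (K : nat) (n : 'I_K -> nat) (w : seq 'I_K) : bool :=
  some_emptied n w && [forall k : 'I_(size w), ~~ some_emptied n (take k w)].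

Definition Pr_tau (R : realFieldType) (K : nat) (n : 'I_K -> nat) (t : nat) : R :=
  (\sum_(w : t.-tuple 'I_K) (if tau_is_len n w then path_prob R n w else 0%R))%R.

Definition Pr_tau_p (R : realFieldType) (K : nat) (n : 'I_K -> nat) (t : nat)
  (i : 'I_K) : R :=
  (\sum_(w : t.-tuple 'I_K)
     (if tau_is_len n w && emptied_type n w i then path_prob R n w else 0%R))%R.

(* Let q_t(s, i) be the probability, from stock s, that the first emptying
   event happens at time t and empties type i.  Conditioning on the first
   choice, q_(t+1)(s, i) is 1/nnz(s) times the sum of [t = 0, s_i = 1] and of
   q_t(s - e_j, i) over the j with s_j > 1, and relabelling the goodie types
   shows q_t(s, i) = q_t(s, i') whenever s_i = s_i'.  By induction on t,
   0 < s_i1 <= s_i2 then gives q_t(s, i2) <= q_t(s, i1): equal stocks are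
   handled by symmetry, a strict inequality survives each step as a weak one,
   and it prevents i2 from being emptied at the first step.  Dividing by
   Pr[tau = t] concludes. *)

From HB Require Import structures.
From mathcomp Require Import all_boot all_order all_algebra.
From mathcomp Require Import perm zify.
Import Order.TTheory GRing.Theory Num.Theory.
Set Implicit Arguments. Unset Strict Implicit.

Lemma big_tuple_cons (R : Type) (idx : R) (op : Monoid.com_law idx)
    (T : finType) (t : nat) (F : t.+1.-tuple T -> R) :
  \big[op/idx]_(w : t.+1.-tuple T) F w =
  \big[op/idx]_(x : T) \big[op/idx]_(w : t.-tuple T) F [tuple of x :: w].
Proof.
rewrite pair_big.
rewrite (reindex (fun p : T * t.-tuple T => [tuple of p.1 :: p.2])) //=.
exists (fun w : t.+1.-tuple T => (thead w, [tuple of behead w])).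
  by move=> [x w] _ /=; rewrite theadE; congr pair; apply: val_inj.
by move=> w _ /=; rewrite [RHS]tuple_eta.
Qed.

Lemma forall_ordS (m : nat) (P : nat -> bool) :
  [forall k : 'I_m.+1, P k] = P 0 && [forall k : 'I_m, P k.+1].
Proof.
apply/forallP/andP => [H | [H0 H] [[|k] lt_k]] //.
  by split; [exact: (H ord0) | apply/forallP => k; exact: (H (lift ord0 k))].
exact: (forallP H (Ordinal (lt_k : k < m))).
Qed.

Section Symmetry.
Variables (K : nat) (sigma : {perm 'I_K}).
Implicit Types (s u : 'I_K -> nat) (w : seq 'I_K).

Lemma nnz_perm s u : (forall x, u (sigma x) = s x) -> nnz u = nnz s.
Proof.
move=> uE.
rewrite /nnz -(card_image (@perm_inj _ sigma) [pred j | 0 < s j]).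
apply: eq_card => y; rewrite -[y](permKV sigma) mem_image ?inE ?uE //.
exact: perm_inj.
Qed.

Lemma dec_stock_perm s u j : (forall x, u (sigma x) = s x) ->
  forall x, dec_stock u (sigma j) (sigma x) = dec_stock s j x.
Proof. by move=> uE x; rewrite /dec_stock (inj_eq (@perm_inj _ sigma)) !uE. Qed.

Lemma stock_after_perm s u w : (forall x, u (sigma x) = s x) ->
  forall x, stock_after u (map sigma w) (sigma x) = stock_after s w x.
Proof.
elim: w s u => [|j w IHw] s s' uE //=.
exact/IHw/dec_stock_perm.
Qed.

Lemma path_prob_perm (R : realFieldType) s u w :
  (forall x, u (sigma x) = s x) ->
  path_prob R u (map sigma w) = path_prob R s w.
Proof.
elim: w s u => [|j w IHw] s s' uE //=.
by rewrite (nnz_perm uE) uE (IHw _ _ (dec_stock_perm j uE)).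
Qed.

Lemma emptied_type_perm s u w i : (forall x, u (sigma x) = s x) ->
  emptied_type u (map sigma w) (sigma i) = emptied_type s w i.
Proof. by move=> uE; rewrite /emptied_type (stock_after_perm _ uE) uE. Qed.

Lemma some_emptied_perm s u w : (forall x, u (sigma x) = s x) ->
  some_emptied u (map sigma w) = some_emptied s w.
Proof.
move=> uE; apply/existsP/existsP => [[i] | [i]]; last first.
  by exists (sigma i); rewrite (emptied_type_perm _ _ uE).
by rewrite -[i](permKV sigma) (emptied_type_perm _ _ uE); exists (sigma^-1 i)%g.
Qed.

Lemma tau_is_len_perm s u w : (forall x, u (sigma x) = s x) ->
  tau_is_len u (map sigma w) = tau_is_len s w.
Proof.
move=> uE; rewrite /tau_is_len (some_emptied_perm _ uE) size_map; congr andb.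
by apply: eq_forallb => k; rewrite -map_take (some_emptied_perm _ uE).
Qed.

Lemma Pr_tau_p_perm (R : realFieldType) s u t i :
  (forall x, u (sigma x) = s x) -> Pr_tau_p R u t (sigma i) = Pr_tau_p R s t i.
Proof.
move=> uE.
have map_inj : injective (fun w : t.-tuple 'I_K => map_tuple sigma w).
  by move=> w1 w2 /(congr1 val) /(inj_map (@perm_inj _ sigma)) /val_inj.
rewrite /Pr_tau_p (reindex_inj map_inj); apply: eq_bigr => w _ /=.
rewrite (tau_is_len_perm _ uE) (emptied_type_perm _ _ uE).
by rewrite (path_prob_perm _ _ uE).
Qed.

End Symmetry.

Lemma Pr_tau_p_swap (R : realFieldType) (K : nat) (s : 'I_K -> nat) t
    (i1 i2 : 'I_K) :
  s i1 = s i2 -> Pr_tau_p R s t i2 = Pr_tau_p R s t i1.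
Proof.
move=> s12; rewrite -{1}(tpermL i1 i2); apply: Pr_tau_p_perm => x.
by case: tpermP => // ->.
Qed.

Section FirstStep.
Variable K : nat.
Implicit Types (s : 'I_K -> nat) (w : seq 'I_K).

Lemma some_emptied_nil s : some_emptied s [::] = false.
Proof. by apply/existsP => -[i]; rewrite /emptied_type /=; case: (s i). Qed.

Lemma emptied_type_cons s j w i : 1 < s j ->
  emptied_type s (j :: w) i = emptied_type (dec_stock s j) w i.
Proof.
move=> s_j_gt1; rewrite /emptied_type /stock_after /=; congr andb.
by rewrite /dec_stock; case: eqP => // ->; case: (s j) s_j_gt1 => [|[]].
Qed.

Lemma some_emptied_cons s j w : 1 < s j ->
  some_emptied s (j :: w) = some_emptied (dec_stock s j) w.
Proof.
by move=> s_j_gt1; apply: eq_existsb => i; rewrite emptied_type_cons.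
Qed.

Lemma tau_is_len_cons s j w : 1 < s j ->
  tau_is_len s (j :: w) = tau_is_len (dec_stock s j) w.
Proof.
move=> s_j_gt1; rewrite /tau_is_len some_emptied_cons //.
rewrite (forall_ordS _ (fun k => ~~ some_emptied s (take k (j :: w)))) /=.
rewrite some_emptied_nil; congr andb.
by apply: eq_forallb => k; rewrite some_emptied_cons.
Qed.

Lemma emptied_type_last s j i : s j = 1 -> emptied_type s [:: j] i = (j == i).
Proof.
move=> s_j1; rewrite /emptied_type /= /dec_stock [j == i]eq_sym.
by have [->|_] := eqVneq i j; rewrite ?s_j1 //; case: (s i).
Qed.

Lemma tau_is_len_last s j w : s j = 1 -> tau_is_len s (j :: w) = nilp w.
Proof.
move=> s_j1; have emptied_j : some_emptied s [:: j].
  by apply/existsP; exists j; rewrite emptied_type_last.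
rewrite /tau_is_len (forall_ordS _ (fun k => ~~ some_emptied s (take k (j :: w)))).
rewrite /= some_emptied_nil; case: w => [|k w].
  by rewrite emptied_j; apply/forallP => -[].
rewrite (forall_ordS _ (fun k' => ~~ some_emptied s (take k'.+1 [:: j, k & w]))).
by rewrite /= emptied_j andbF.
Qed.

End FirstStep.

Local Open Scope ring_scope.

Section Recursion.
Variables (R : realFieldType) (K : nat).
Implicit Types (s : 'I_K -> nat).

Lemma Pr_tau_p0 s i : Pr_tau_p R s 0 i = 0.
Proof. by apply: big1 => w _; rewrite tuple0 /tau_is_len some_emptied_nil. Qed.

Lemma Pr_tau_p_first_step s j t i : (2 <= nnz s)%N ->
  \sum_(w : t.-tuple 'I_K)
     (if tau_is_len s (j :: w) && emptied_type s (j :: w) i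
      then path_prob R s (j :: w) else 0)
  = (nnz s)%:R^-1 *
    ([&& t == 0%N, s j == 1%N & j == i]%:R
     + (if (1 < s j)%N then Pr_tau_p R (dec_stock s j) t i else 0)).
Proof.
move=> nnz_ge2; case: (ltngtP (s j) 1) => [s_j_lt1 | s_j_gt1 | s_j1].
- have s_j0 : s j = 0%N by case: (s j) s_j_lt1.
  rewrite andFb andbF mulr0n addr0 mulr0 big1 // => w _.
  by rewrite /= s_j0 andbF if_same.
- rewrite andFb andbF mulr0n add0r /Pr_tau_p mulr_sumr.
  apply: eq_bigr => w _; rewrite tau_is_len_cons // emptied_type_cons //=.
  by rewrite nnz_ge2 (ltnW s_j_gt1); case: ifP; rewrite ?mulr0.
- rewrite addr0 andTb; case: t => [|t].
    rewrite (big_pred1 [tuple] (P := xpredT)) => [|w]; last first.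
      exact/esym/eqP/tuple0.
    rewrite /= tau_is_len_last // emptied_type_last // nnz_ge2 s_j1 mulr1.
    by case: (j == i); rewrite ?mulr1 ?mulr0.
  rewrite /= mulr0n mulr0 big1 // => w _.
  by rewrite tau_is_len_last // /nilp size_tuple.
Qed.

Lemma Pr_tau_pS s t i : Pr_tau_p R s t.+1 i =
  if (2 <= nnz s)%N then
    (nnz s)%:R^-1 * (((t == 0%N) && (s i == 1%N))%:R
                     + \sum_(j | (1 < s j)%N) Pr_tau_p R (dec_stock s j) t i)
  else 0.
Proof.
rewrite {1}/Pr_tau_p big_tuple_cons; case: ifP => nnz_ge2; last first.
  by apply: big1 => j _; apply: big1 => w _ /=; rewrite nnz_ge2; case: ifP.
under eq_bigr do rewrite Pr_tau_p_first_step //.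
rewrite -mulr_sumr big_split /= -big_mkcond; congr (_ * (_ + _)).
rewrite (bigD1 i) //= eqxx andbT big1 ?addr0 // => j /negPf ->.
by rewrite !andbF.
Qed.

Lemma Pr_tau_p_le s t (i1 i2 : 'I_K) : (0 < s i1)%N -> (s i1 <= s i2)%N ->
  Pr_tau_p R s t i2 <= Pr_tau_p R s t i1.
Proof.
elim: t s => [|t IHt] s s_i1_gt0 le_s12; first by rewrite !Pr_tau_p0.
have [eq_s12 | ne_s12] := eqVneq (s i1) (s i2).
  by rewrite (Pr_tau_p_swap _ _ eq_s12).
have s_i2_gt1 : (1 < s i2)%N by lia.
rewrite !Pr_tau_pS; case: ifP => // _.
rewrite ler_wpM2l ?invr_ge0 ?ler0n // lerD ?ler_sum // => [|j s_j_gt1].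
  by rewrite (gtn_eqF s_i2_gt1) andbF ler0n.
apply: IHt; rewrite /dec_stock; first by case: ifP => [/eqP ->|_]; lia.
by do 2 case: ifP => _; lia.
Qed.

End Recursion.

Theorem lemma12 (R : realFieldType) (K : nat) (hK : (2 < K)%N)
  (n : 'I_K -> nat) (i1 i2 : 'I_K) (h1 : val i1 = 0%N) (h2 : val i2 = 1%N)
  (hpos : forall j, (0 < n j)%N) (h12 : (n i1 < n i2)%N) (t : nat)
  (ht : 0 < Pr_tau R n t) :
  Pr_tau_p R n t i2 / Pr_tau R n t <= Pr_tau_p R n t i1 / Pr_tau R n t.
Proof.
apply: ler_wpM2r; first by rewrite invr_ge0 ltW.
exact: Pr_tau_p_le (hpos i1) (ltnW h12).
Qed.
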